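(* Let $\alpha\ge1$, let $B\le B_a$ be positive integers, let $\ell$ and $I$ be integers with $0\le\ell\le B_a$ and $I\ge \ell$, and let $(w_k)_{k\le I}$ be real numbers with $w_k=0$ for $k\le 0$ and $0\le w_1\le w_2\le\cdots\le w_I$. For $0\le j\le I$ let $$\beta^{(j)}:=c\sum_{i=1}^{B_a}w_{j-B_a+i}\,E^{\alpha(B_a-i)/B_a},$$ and define $$\mathrm{PRD}_a:=\frac{1}{\alpha_B}\sum_{i=1}^{I-\ell}\left(w_i-\beta^{(i-1)}\right)+\sum_{i=I-\ell+1}^{I}w_i+(B_a-\ell)\beta^{(I)}.$$ Then $$\mathrm{PRD}_a\le\sum_{i=I-B_a+1}^{I-\ell}\phi_i w_i+\sum_{i=I-\ell+1}^{I}\psi_i w_i+w_{I-B_a}\,\Omega,$$ where $$\phi_i:=(B_a-\ell)\,c\,E^{\alpha(I-i)/B_a}+\frac{1}{\alpha_B}\cdot\frac{E^{\alpha}-E^{\alpha(I-\ell-i)/B_a}}{E^{\alpha}-1},\qquad \psi_i:=1+(B_a-\ell)\,c\,E^{\alpha(I-i)/B_a},$$ $$\Omega:=\frac{1}{\alpha_B}\cdot\frac{1}{E^{\alpha}-1}\left(\ell E^{\alpha}-\frac{E^{\alpha}-E^{\alpha(B_a-\ell)/B_a}}{E^{\alpha/B_a}-1}\right).$$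
   Context: Notation: $E:=(1+1/B_a)^{B_a}$, $c:=\frac{E^{\alpha/B_a}-1}{E^{\alpha}-1}$, $e_B:=(1+1/B)^B$ and $\alpha_B:=B(e_B^{\alpha/B}-1)$. *)

From Stdlib Require Import Reals ZArith List Lra Lia.
Open Scope R_scope.

(* Sum of f k for integer k with a <= k <= b (empty if b < a). *)
Definition Zsum (a b : Z) (f : Z -> R) : R :=
  fold_right Rplus 0
    (map (fun n : nat => f (a + Z.of_nat n)%Z) (seq 0 (Z.to_nat (b - a + 1)))).

Definition Ebig (Ba : nat) : R := (1 + 1 / INR Ba) ^ Ba.

Definition cconst (alpha : R) (Ba : nat) : R :=
  (Rpower (Ebig Ba) (alpha / INR Ba) - 1) / (Rpower (Ebig Ba) alpha - 1).

Definition eB (B : nat) : R := (1 + 1 / INR B) ^ B.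

Definition alphaB (alpha : R) (B : nat) : R :=
  INR B * (Rpower (eB B) (alpha / INR B) - 1).

Definition beta (alpha : R) (Ba : nat) (w : Z -> R) (j : Z) : R :=
  cconst alpha Ba *
  Zsum 1 (Z.of_nat Ba) (fun i =>
    w (j - Z.of_nat Ba + i)%Z *
    Rpower (Ebig Ba) (alpha * (INR Ba - IZR i) / INR Ba)).

Definition PRDa (alpha : R) (B Ba l : nat) (I : Z) (w : Z -> R) : R :=
  / alphaB alpha B *
    Zsum 1 (I - Z.of_nat l) (fun i => w i - beta alpha Ba w (i - 1)%Z)
  + Zsum (I - Z.of_nat l + 1) I w
  + (INR Ba - INR l) * beta alpha Ba w I.

Definition phi (alpha : R) (B Ba l : nat) (I i : Z) : R :=
  (INR Ba - INR l) * cconst alpha Ba *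
    Rpower (Ebig Ba) (alpha * IZR (I - i) / INR Ba)
  + / alphaB alpha B *
    ((Rpower (Ebig Ba) alpha
      - Rpower (Ebig Ba) (alpha * IZR (I - Z.of_nat l - i) / INR Ba))
     / (Rpower (Ebig Ba) alpha - 1)).

Definition psi (alpha : R) (Ba l : nat) (I i : Z) : R :=
  1 + (INR Ba - INR l) * cconst alpha Ba *
    Rpower (Ebig Ba) (alpha * IZR (I - i) / INR Ba).

Definition Omega (alpha : R) (B Ba l : nat) : R :=
  / alphaB alpha B * / (Rpower (Ebig Ba) alpha - 1) *
  (INR l * Rpower (Ebig Ba) alpha
   - (Rpower (Ebig Ba) alpha
      - Rpower (Ebig Ba) (alpha * (INR Ba - INR l) / INR Ba))
     / (Rpower (Ebig Ba) (alpha / INR Ba) - 1)).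

From Stdlib Require Import Reals ZArith List Lra Lia.
Open Scope R_scope.

(* Write q := E^(alpha/B_a) and Q := E^alpha = q^(B_a).  The
   partial sums of  w_i - beta^(i-1)  telescope: the "potential"
     T(N) := sum_(n < B_a) w_(N-B_a+1+n) * (Q - q^(B_a-1-n)) / (Q - 1)
   satisfies T(N+1) = T(N) + w_(N+1) - beta^(N), so (as w vanishes on
   nonpositive indices) sum_(i=1)^(N) (w_i - beta^(i-1)) = T(N).
   Evaluate this at N = I - l and split the window of T(I-l) into its l
   oldest entries (indices <= I - B_a) and the remaining B_a - l ones; split
   the window of beta^(I) at I - l likewise.  The recent parts reassemble
   exactly into the phi- and psi-sums, while by monotonicity each old entry
   is at most w_(I-B_a), and a geometric sum turns their total weight into
   Omega. *)

Definition sumn (n : nat) (g : nat -> R) : R := fold_right Rplus 0 (map g (seq 0 n)).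

Lemma Zsum_sumn (a b : Z) (f : Z -> R) :
  Zsum a b f = sumn (Z.to_nat (b - a + 1)) (fun n => f (a + Z.of_nat n)%Z).
Proof. reflexivity. Qed.

Lemma fold_Rplus_acc (l : list R) (x : R) :
  fold_right Rplus x l = fold_right Rplus 0 l + x.
Proof. induction l as [|a l IH]; simpl; [lra | rewrite IH; lra]. Qed.

Lemma sumn_0 (g : nat -> R) : sumn 0 g = 0.
Proof. reflexivity. Qed.

Lemma sumn_S (n : nat) (g : nat -> R) : sumn (S n) g = sumn n g + g n.
Proof.
  unfold sumn. rewrite seq_S, map_app, fold_right_app. simpl.
  rewrite fold_Rplus_acc. lra.
Qed.

Lemma sumn_ext (n : nat) (f g : nat -> R) :
  (forall k, (k < n)%nat -> f k = g k) -> sumn n f = sumn n g.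
Proof.
  induction n as [|n IH]; intros H; [reflexivity|].
  rewrite !sumn_S, IH by (intros; apply H; lia). rewrite H by lia. reflexivity.
Qed.

Lemma sumn_le (n : nat) (f g : nat -> R) :
  (forall k, (k < n)%nat -> f k <= g k) -> sumn n f <= sumn n g.
Proof.
  induction n as [|n IH]; intros H; [rewrite !sumn_0; lra|].
  rewrite !sumn_S.
  assert (sumn n f <= sumn n g) by (apply IH; intros; apply H; lia).
  specialize (H n ltac:(lia)). lra.
Qed.

Lemma sumn_plus (n : nat) (f g : nat -> R) :
  sumn n (fun k => f k + g k) = sumn n f + sumn n g.
Proof. induction n as [|n IH]; [rewrite !sumn_0; lra|]. rewrite !sumn_S, IH. lra. Qed.

Lemma sumn_minus (n : nat) (f g : nat -> R) :
  sumn n (fun k => f k - g k) = sumn n f - sumn n g.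
Proof. induction n as [|n IH]; [rewrite !sumn_0; lra|]. rewrite !sumn_S, IH. lra. Qed.

Lemma sumn_scal (n : nat) (a : R) (f : nat -> R) :
  sumn n (fun k => a * f k) = a * sumn n f.
Proof. induction n as [|n IH]; [rewrite !sumn_0; lra|]. rewrite !sumn_S, IH. lra. Qed.

Lemma sumn_const (n : nat) (a : R) : sumn n (fun _ => a) = INR n * a.
Proof.
  induction n as [|n IH]; [rewrite sumn_0; simpl; lra|].
  rewrite sumn_S, IH, S_INR. lra.
Qed.

Lemma sumn_zero (n : nat) (g : nat -> R) :
  (forall k, (k < n)%nat -> g k = 0) -> sumn n g = 0.
Proof. intros H. rewrite (sumn_ext n g (fun _ => 0)) by exact H. rewrite sumn_const. lra. Qed.

Lemma sumn_split (n m : nat) (g : nat -> R) : (m <= n)%nat ->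
  sumn n g = sumn m g + sumn (n - m) (fun k => g (m + k)%nat).
Proof.
  intros Hmn. replace n with (m + (n - m))%nat at 1 by lia.
  induction (n - m)%nat as [|d IH]; [rewrite Nat.add_0_r, sumn_0; lra|].
  rewrite Nat.add_succ_r, !sumn_S, IH. lra.
Qed.

Lemma sumn_shift (m : nat) (g : nat -> R) :
  sumn m (fun k => g (S k)) = sumn m g + g m - g 0%nat.
Proof. induction m as [|m IH]; [rewrite !sumn_0; lra|]. rewrite !sumn_S, IH. lra. Qed.

Definition Epow (alpha : R) (Ba : nat) (x : R) : R :=
  Rpower (Ebig Ba) (alpha * x / INR Ba).

(* (1 + 1/B)^B > 1 for every B >= 1 (both E and e_B have this form). *)
Lemma Ebig_gt1 (Ba : nat) : (1 <= Ba)%nat -> 1 < Ebig Ba.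
Proof.
  intros H. apply Rlt_pow_R1; [|lia].
  assert (0 < / INR Ba) by (apply Rinv_0_lt_compat, lt_0_INR; lia).
  unfold Rdiv. lra.
Qed.

Lemma Rpower_gt1 (b t : R) : 1 < b -> 0 < t -> 1 < Rpower b t.
Proof. intros Hb Ht. rewrite <- (Rpower_O b) by lra. apply Rpower_lt; lra. Qed.

Lemma alphaB_pos (alpha : R) (B : nat) : (1 <= B)%nat -> 0 < alpha -> 0 < alphaB alpha B.
Proof.
  intros HB Ha. unfold alphaB.
  assert (0 < INR B) by (apply lt_0_INR; lia).
  assert (1 < Rpower (eB B) (alpha / INR B)).
  { apply Rpower_gt1; [exact (Ebig_gt1 B HB)|].
    unfold Rdiv. apply Rmult_lt_0_compat; [lra | apply Rinv_0_lt_compat; lra]. }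
  apply Rmult_lt_0_compat; lra.
Qed.

Section Potential.

Variables (alpha : R) (Ba : nat).
Hypotheses (HBa : (1 <= Ba)%nat) (Halpha : 0 < alpha).

Local Notation Q := (Rpower (Ebig Ba) alpha).
Local Notation q := (Rpower (Ebig Ba) (alpha / INR Ba)).

Let Ba_pos : 0 < INR Ba.
Proof. apply lt_0_INR; lia. Qed.

Lemma Q_gt1 : 1 < Q.
Proof. apply Rpower_gt1; [apply Ebig_gt1|]; auto. Qed.

Lemma q_gt1 : 1 < q.
Proof.
  apply Rpower_gt1; [apply Ebig_gt1; auto|].
  unfold Rdiv. apply Rmult_lt_0_compat; [lra | apply Rinv_0_lt_compat; lra].
Qed.

Lemma Epow_plus (x y : R) : Epow alpha Ba (x + y) = Epow alpha Ba x * Epow alpha Ba y.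
Proof. unfold Epow. rewrite <- Rpower_plus. f_equal. field. lra. Qed.

Lemma Epow_0 : Epow alpha Ba 0 = 1.
Proof.
  unfold Epow. replace (alpha * 0 / INR Ba) with 0 by (field; lra).
  apply Rpower_O. pose proof (Ebig_gt1 Ba HBa). lra.
Qed.

Lemma Epow_1 : Epow alpha Ba 1 = q.
Proof. unfold Epow. f_equal. field. lra. Qed.

Lemma Epow_Ba : Epow alpha Ba (INR Ba) = Q.
Proof. unfold Epow. f_equal. field. lra. Qed.

Lemma Epow_le_Q (x : R) : x <= INR Ba -> Epow alpha Ba x <= Q.
Proof.
  intros Hx. rewrite <- Epow_Ba. unfold Epow.
  apply Rle_Rpower; [pose proof (Ebig_gt1 Ba HBa); lra|].
  apply Rmult_le_compat_r; [left; apply Rinv_0_lt_compat; lra|].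
  apply Rmult_le_compat_l; lra.
Qed.

Lemma geometric_sum (m : nat) :
  sumn m (fun n => Epow alpha Ba (INR Ba - 1 - INR n))
  = (Q - Epow alpha Ba (INR Ba - INR m)) / (q - 1).
Proof.
  pose proof q_gt1.
  induction m as [|m IH].
  - rewrite sumn_0, Rminus_0_r, Epow_Ba. field_simplify; [lra|lra].
  - rewrite sumn_S, IH, S_INR.
    replace (INR Ba - INR m) with ((INR Ba - (INR m + 1)) + 1) by ring.
    rewrite Epow_plus, Epow_1.
    replace (INR Ba - 1 - INR m) with (INR Ba - (INR m + 1)) by ring.
    field. lra.
Qed.

Lemma beta_sumn (w : Z -> R) (j : Z) :
  beta alpha Ba w j = cconst alpha Ba *
    sumn Ba (fun n => w (j - Z.of_nat Ba + 1 + Z.of_nat n)%Z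
                      * Epow alpha Ba (INR Ba - 1 - INR n)).
Proof.
  unfold beta. f_equal. rewrite Zsum_sumn.
  replace (Z.to_nat (Z.of_nat Ba - 1 + 1)) with Ba by lia.
  apply sumn_ext. intros k Hk. f_equal; [f_equal; lia|].
  unfold Epow. f_equal. f_equal. f_equal.
  rewrite plus_IZR, <- INR_IZR_INZ. simpl. ring.
Qed.

Definition tail_weight (x : R) : R := (Q - Epow alpha Ba x) / (Q - 1).

Lemma tail_weight_nonneg (x : R) : x <= INR Ba -> 0 <= tail_weight x.
Proof.
  intros Hx. pose proof (Epow_le_Q x Hx). pose proof Q_gt1.
  unfold tail_weight, Rdiv. apply Rmult_le_pos; [lra | left; apply Rinv_0_lt_compat; lra].
Qed.

Definition potential (w : Z -> R) (N : Z) : R :=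
  sumn Ba (fun n => w (N - Z.of_nat Ba + 1 + Z.of_nat n)%Z
                    * tail_weight (INR Ba - 1 - INR n)).

(* One step of the weight: q^(x+1) = q^x + (q - 1) q^x, and c = (q-1)/(Q-1). *)
Lemma tail_weight_succ (x : R) :
  tail_weight (x + 1) = tail_weight x - cconst alpha Ba * Epow alpha Ba x.
Proof.
  pose proof Q_gt1. unfold tail_weight, cconst.
  rewrite Epow_plus, Epow_1. field. lra.
Qed.

Lemma potential_step (w : Z -> R) (N : Z) :
  potential w (N + 1)%Z = potential w N + w (N + 1)%Z - beta alpha Ba w N.
Proof.
  pose proof Q_gt1.
  set (g := fun n : nat => w (N - Z.of_nat Ba + 1 + Z.of_nat n)%Z
                           * tail_weight (INR Ba - INR n)).
  assert (shifted : potential w (N + 1)%Z = sumn Ba (fun n => g (S n))).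
  { apply sumn_ext. intros k Hk. unfold g. rewrite S_INR.
    f_equal; [f_equal; lia | f_equal; ring]. }
  assert (last_term : g Ba = w (N + 1)%Z).
  { unfold g, tail_weight. rewrite Rminus_diag, Epow_0.
    replace (N - Z.of_nat Ba + 1 + Z.of_nat Ba)%Z with (N + 1)%Z by lia. field. lra. }
  assert (first_term : g 0%nat = 0).
  { unfold g, tail_weight. simpl INR. rewrite Rminus_0_r, Epow_Ba. field_simplify; lra. }
  assert (body : sumn Ba g = potential w N - beta alpha Ba w N).
  { rewrite beta_sumn, <- sumn_scal. unfold potential. rewrite <- sumn_minus.
    apply sumn_ext. intros k Hk. unfold g.
    replace (INR Ba - INR k) with ((INR Ba - 1 - INR k) + 1) by ring.
    rewrite tail_weight_succ. ring. }
  rewrite shifted, sumn_shift, last_term, first_term, body. ring.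
Qed.

Lemma partial_sum_potential (w : Z -> R) (k : nat) :
  (forall z : Z, (z <= 0)%Z -> w z = 0) ->
  Zsum 1 (Z.of_nat k) (fun i => w i - beta alpha Ba w (i - 1)%Z) = potential w (Z.of_nat k).
Proof.
  intros Hw0. induction k as [|k IH].
  - symmetry. apply sumn_zero. intros n Hn. rewrite Hw0 by lia. ring.
  - rewrite Zsum_sumn in IH |- *.
    replace (Z.to_nat (Z.of_nat k - 1 + 1)) with k in IH by lia.
    replace (Z.to_nat (Z.of_nat (S k) - 1 + 1)) with (S k) by lia.
    rewrite sumn_S, IH, Nat2Z.inj_succ, <- Z.add_1_r, potential_step.
    replace (1 + Z.of_nat k)%Z with (Z.of_nat k + 1)%Z by lia.
    replace (Z.of_nat k + 1 - 1)%Z with (Z.of_nat k) by lia. ring.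
Qed.

End Potential.

Section Monotone.

Variables (I : Z) (w : Z -> R).
Hypotheses (Hw0 : forall k : Z, (k <= 0)%Z -> w k = 0)
           (Hwp : forall k : Z, (1 <= k <= I)%Z -> 0 <= w k)
           (Hwm : forall k : Z, (1 <= k < I)%Z -> w k <= w (k + 1)%Z).

Lemma extended_step (k : Z) : (k < I)%Z -> w k <= w (k + 1)%Z.
Proof.
  intros HkI. destruct (Z_le_gt_dec 1 k) as [Hk | Hk]; [apply Hwm; lia|].
  rewrite (Hw0 k) by lia.
  destruct (Z_le_gt_dec (k + 1) 0) as [Hk1 | Hk1].
  - rewrite Hw0 by lia. lra.
  - apply Hwp. lia.
Qed.

Lemma extended_monotone (m m' : Z) : (m <= m' <= I)%Z -> w m <= w m'.
Proof.
  intros Hm. replace m' with (m + Z.of_nat (Z.to_nat (m' - m)))%Z by lia.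
  assert (Hd : (m + Z.of_nat (Z.to_nat (m' - m)) <= I)%Z) by lia.
  induction (Z.to_nat (m' - m)) as [|d IH].
  - rewrite Z.add_0_r. lra.
  - rewrite Nat2Z.inj_succ, Z.add_succ_r, <- Z.add_1_r in Hd |- *.
    pose proof (extended_step (m + Z.of_nat d) ltac:(lia)). specialize (IH ltac:(lia)). lra.
Qed.

End Monotone.

Section Split.

Variables (alpha : R) (Ba l : nat) (I : Z) (w : Z -> R).
Hypotheses (HBa : (1 <= Ba)%nat) (Halpha : 0 < alpha) (Hl : (l <= Ba)%nat).

Local Notation Q := (Rpower (Ebig Ba) alpha).
Local Notation q := (Rpower (Ebig Ba) (alpha / INR Ba)).

Definition stale_part : R :=
  sumn l (fun n => w (I - Z.of_nat l - Z.of_nat Ba + 1 + Z.of_nat n)%Z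
                   * tail_weight alpha Ba (INR Ba - 1 - INR n)).

Definition live_part : R :=
  sumn (Ba - l) (fun n => w (I - Z.of_nat Ba + 1 + Z.of_nat n)%Z
                          * tail_weight alpha Ba (INR Ba - INR l - 1 - INR n)).

Definition beta_head : R :=
  sumn (Ba - l) (fun n => w (I - Z.of_nat Ba + 1 + Z.of_nat n)%Z
                          * Epow alpha Ba (INR Ba - 1 - INR n)).

Definition beta_tail : R :=
  sumn l (fun n => w (I - Z.of_nat l + 1 + Z.of_nat n)%Z
                   * Epow alpha Ba (INR l - 1 - INR n)).

Lemma potential_split : potential alpha Ba w (I - Z.of_nat l) = stale_part + live_part.
Proof.
  unfold potential. rewrite (sumn_split Ba l) by lia.
  unfold stale_part, live_part. f_equal. apply sumn_ext. intros k Hk.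
  rewrite plus_INR. f_equal; [f_equal; lia | f_equal; ring].
Qed.

Lemma beta_split : beta alpha Ba w I = cconst alpha Ba * (beta_head + beta_tail).
Proof.
  rewrite beta_sumn by auto. f_equal.
  rewrite (sumn_split Ba (Ba - l)) by lia.
  replace (Ba - (Ba - l))%nat with l by lia.
  unfold beta_head, beta_tail. f_equal. apply sumn_ext. intros k Hk.
  rewrite plus_INR, minus_INR by lia. f_equal; [f_equal; lia | f_equal; ring].
Qed.

Lemma phi_sum (B : nat) :
  Zsum (I - Z.of_nat Ba + 1) (I - Z.of_nat l) (fun i => phi alpha B Ba l I i * w i)
  = (INR Ba - INR l) * cconst alpha Ba * beta_head + / alphaB alpha B * live_part.
Proof.
  rewrite Zsum_sumn.
  replace (Z.to_nat (I - Z.of_nat l - (I - Z.of_nat Ba + 1) + 1)) with (Ba - l)%nat by lia.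
  unfold beta_head, live_part. rewrite <- !sumn_scal, <- sumn_plus.
  apply sumn_ext. intros k Hk. unfold phi, tail_weight, Epow.
  replace (I - (I - Z.of_nat Ba + 1 + Z.of_nat k))%Z
    with (Z.of_nat Ba - 1 - Z.of_nat k)%Z by lia.
  replace (I - Z.of_nat l - (I - Z.of_nat Ba + 1 + Z.of_nat k))%Z
    with (Z.of_nat Ba - Z.of_nat l - 1 - Z.of_nat k)%Z by lia.
  rewrite !minus_IZR, <- !INR_IZR_INZ. ring.
Qed.

Lemma psi_sum :
  Zsum (I - Z.of_nat l + 1) I (fun i => psi alpha Ba l I i * w i)
  = Zsum (I - Z.of_nat l + 1) I w + (INR Ba - INR l) * cconst alpha Ba * beta_tail.
Proof.
  rewrite !Zsum_sumn.
  replace (Z.to_nat (I - (I - Z.of_nat l + 1) + 1)) with l by lia.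
  unfold beta_tail. rewrite <- !sumn_scal, <- sumn_plus.
  apply sumn_ext. intros k Hk. unfold psi, Epow.
  replace (I - (I - Z.of_nat l + 1 + Z.of_nat k))%Z
    with (Z.of_nat l - 1 - Z.of_nat k)%Z by lia.
  rewrite !minus_IZR, <- !INR_IZR_INZ. ring.
Qed.

Lemma stale_weights_sum (B : nat) :
  / alphaB alpha B * sumn l (fun n => tail_weight alpha Ba (INR Ba - 1 - INR n))
  = Omega alpha B Ba l.
Proof.
  pose proof (Q_gt1 alpha Ba HBa Halpha). pose proof (q_gt1 alpha Ba HBa Halpha).
  unfold Omega. rewrite Rmult_assoc. f_equal.
  unfold tail_weight, Rdiv.
  rewrite sumn_ext with (g := fun n => / (Q - 1) * Q - / (Q - 1) * Epow alpha Ba (INR Ba - 1 - INR n))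
    by (intros; ring).
  rewrite sumn_minus, !sumn_scal, sumn_const, geometric_sum by auto.
  unfold Epow. unfold Rdiv. ring.
Qed.

Lemma stale_bound (B : nat) : (1 <= B)%nat ->
  (forall k : Z, (k <= I - Z.of_nat Ba)%Z -> w k <= w (I - Z.of_nat Ba)%Z) ->
  / alphaB alpha B * stale_part <= w (I - Z.of_nat Ba)%Z * Omega alpha B Ba l.
Proof.
  intros HB Hw. rewrite <- stale_weights_sum, <- Rmult_assoc, (Rmult_comm _ (/ _)), Rmult_assoc.
  apply Rmult_le_compat_l; [left; apply Rinv_0_lt_compat, alphaB_pos; auto|].
  rewrite <- sumn_scal. apply sumn_le. intros k Hk.
  apply Rmult_le_compat_r.
  - apply tail_weight_nonneg; auto. pose proof (pos_INR k). lra.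
  - apply Hw. lia.
Qed.

End Split.

Theorem lemmaA6 (alpha : R) (B Ba l : nat) (I : Z) (w : Z -> R) :
  1 <= alpha ->
  (1 <= B)%nat -> (B <= Ba)%nat ->
  (l <= Ba)%nat ->
  (Z.of_nat l <= I)%Z ->
  (forall k : Z, (k <= 0)%Z -> w k = 0) ->
  (forall k : Z, (1 <= k <= I)%Z -> 0 <= w k) ->
  (forall k : Z, (1 <= k < I)%Z -> w k <= w (k + 1)%Z) ->
  PRDa alpha B Ba l I w <=
    Zsum (I - Z.of_nat Ba + 1) (I - Z.of_nat l) (fun i => phi alpha B Ba l I i * w i)
  + Zsum (I - Z.of_nat l + 1) I (fun i => psi alpha Ba l I i * w i)
  + w (I - Z.of_nat Ba)%Z * Omega alpha B Ba l.
Proof.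
  intros Ha HB HBBa Hl HlI Hw0 Hwp Hwm.
  assert (HBa : (1 <= Ba)%nat) by lia.
  assert (Ha0 : 0 < alpha) by lra.
  assert (Hprefix : Zsum 1 (I - Z.of_nat l) (fun i => w i - beta alpha Ba w (i - 1)%Z)
                    = potential alpha Ba w (I - Z.of_nat l)).
  { pose proof (partial_sum_potential alpha Ba HBa Ha0 w (Z.to_nat (I - Z.of_nat l)) Hw0) as H.
    rewrite Z2Nat.id in H by lia. exact H. }
  assert (Hstale : / alphaB alpha B * stale_part alpha Ba l I w
                   <= w (I - Z.of_nat Ba)%Z * Omega alpha B Ba l).
  { apply stale_bound; auto. intros k Hk. apply (extended_monotone I); auto. lia. }
  unfold PRDa.
  rewrite Hprefix, potential_split, (beta_split alpha Ba l), phi_sum, psi_sum by auto.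
  lra.
Qed.
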